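(* Let $G$ be a graph and let $(G',L,\alpha,\beta)$ be constructed from $G$ as described in the context. If there exists an $L$-recoloring sequence for $G'$ from $\alpha$ to $\beta$ (of any length), then $G$ is 3-colorable.
   Context: A color list assignment $L$ gives each vertex a list $L(v)\subseteq[4]=\{1,2,3,4\}$. An $L$-coloring is a proper coloring $\gamma$ with $\gamma(v)\in L(v)$ for all $v$. $\mathcal{C}(G,L)$ is the graph on $L$-colorings, two adjacent iff they differ on exactly one vertex; an $L$-recoloring sequence of length $m$ is a sequence $\gamma_0,\ldots,\gamma_m$ of $L$-colorings with consecutive ones equal or adjacent in $\mathcal{C}(G,L)$. $(a,b)$-forbidding path: for $a,b\in[4]$, a path $P$ with lists $L(x)\subseteq[4]$ and end vertices $u,v$ is $(a,b)$-forbidding from $u$ to $v$ if (i) for all $x\in L(u)$, $y\in L(v)$, there is an $L$-coloring $\gamma$ of $P$ with $\gamma(u)=x,\gamma(v)=y$ iff $x\ne a$ or $y\ne b$ (such $(x,y)$ are called admissible); and (ii) for any $L$-coloring $\gamma$ of $P$ and any admissible $(x,y)$ with $x=\gamma(u)$ or $y=\gamma(v)$, there is an $L$-recoloring sequence of $P$ from $\gamma$ to an $L$-coloring $\delta$ with $\delta(u)=x,\delta(v)=y$ in which each internal vertex is recolored at most once and $u,v$ are not recolored until the last step. Such paths of length six exist whenever $L(u),L(v)\ne[4]$, $a\in L(u)$, $b\in L(v)$. Construction of $G'$: start with $V(G)$ (no edges among these), each $u\in V(G)$ with $L(u)=\{1,2,3\}$, $\alpha(u)=1$. For every edge $uv\in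 E(G)$ (with a fixed orientation $u,v$), add new vertices $x_{uv},y_{uv},z_{uv}$ with $\alpha$-value $4$ each and $L(x_{uv})=\{1,2,4\}$, $L(y_{uv})=\{3,4\}$, $L(z_{uv})=\{1,2,4\}$; add edges $ux_{uv}$, $uy_{uv}$; and add (each with its own new internal vertices, each of length six) a $(1,2)$-forbidding and a $(3,1)$-forbidding path from $u$ to $x_{uv}$, a $(2,3)$-forbidding path from $u$ to $y_{uv}$, a $(2,1)$-forbidding and a $(3,2)$-forbidding path from $v$ to $x_{uv}$, a $(1,3)$-forbidding path from $v$ to $y_{uv}$, a $(4,1)$-forbidding path from $x_{uv}$ to $z_{uv}$, and a $(4,2)$-forbidding path from $y_{uv}$ to $z_{uv}$. Let $Z=\{z_{uv}\mid uv\in E(G)\}$. Add vertices $a,b,c,d$ with $\alpha(a)=1,\alpha(b)=2,\alpha(c)=3,\alpha(d)=4$, $L(a)=\{1,2,3\}$, $L(b)=\{1,2\}$, $L(c)=\{3,4\}$, $L(d)=\{4\}$, all edges among $a,b,c,d$ except $cd$, and edges from every vertex of $Z$ to $c$. Extend $\alpha$ arbitrarily to an $L$-coloring of all internal vertices of the forbidding paths (possible since the end colors are admissible). Set $\beta(w)=\alpha(w)$ for all $w\ne a,b$, $\beta(a)=2$, $\beta(b)=1$. *)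

From mathcomp Require Import all_boot.
Set Implicit Arguments. Unset Strict Implicit. Unset Printing Implicit Defensive.

(* Colours are natural numbers; the colour set [4] = {1,2,3,4}. *)

Section ListColouring.
Variables (T : Type) (adj : T -> T -> Prop) (L : T -> seq nat).

Definition Lcoloring (g : T -> nat) : Prop :=
  (forall x, g x \in L x) /\ (forall x y, adj x y -> g x <> g y).

Definition col_adjacent (g h : T -> nat) : Prop :=
  exists w, g w <> h w /\ forall x, x <> w -> g x = h x.

Definition col_equal (g h : T -> nat) : Prop := forall x, g x = h x.

Definition recoloring_seq (g : nat -> T -> nat) (m : nat) : Prop :=
  (forall k, k <= m -> Lcoloring (g k)) /\
  (forall k, k < m -> col_equal (g k) (g k.+1) \/ col_adjacent (g k) (g k.+1)).
End ListColouring.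

Definition path7_adj (i j : 'I_7) : Prop := i.+1 = j \/ j.+1 = i.

Definition pu : 'I_7 := ord0.
Definition pv6 : 'I_7 := ord_max.

Definition forbidding (Lp : 'I_7 -> seq nat) (a b : nat) : Prop :=
  (forall x y, x \in Lp pu -> y \in Lp pv6 ->
     ((exists g, Lcoloring path7_adj Lp g /\ g pu = x /\ g pv6 = y)
       <-> (x != a) || (y != b)))
  /\
  (forall g, Lcoloring path7_adj Lp g ->
   forall x y, x \in Lp pu -> y \in Lp pv6 -> (x != a) || (y != b) ->
     (x = g pu \/ y = g pv6) ->
     exists (s : nat -> 'I_7 -> nat) (m : nat),
       [/\ recoloring_seq path7_adj Lp s m,
           col_equal (s 0) g,
           s m pu = x /\ s m pv6 = y,
           (forall i : 'I_7, 0 < i < 6 ->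
              count (fun k => s k i != s k.+1 i) (iota 0 m) <= 1) &
           (* endpoints not recoloured until the last step *)
           (forall k, k.+1 < m -> s k.+1 pu = s k pu /\ s k.+1 pv6 = s k pv6)]).

Definition simple_graph (V : Type) (e : rel V) : Prop :=
  (forall u v, e u v = e v u) /\ (forall u, ~~ e u u).

Definition orientation (V : Type) (e o : rel V) : Prop :=
  (forall u v, o u v -> e u v) /\
  (forall u v, e u v -> o u v || o v u) /\
  (forall u v, o u v -> ~~ o v u).

Definition oedge (V : Type) (o : rel V) := {p : V * V | o p.1 p.2}.

Definition three_colorable (V : Type) (e : rel V) : Prop :=
  exists f : V -> 'I_3, forall u v, e u v -> f u != f v.

(* Vi p k i : the (i+1)-th internal vertex of the k-th forbidding path of edge p *)
Inductive vtx (V E : Type) : Type :=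
| Vo of V | Vx of E | Vy of E | Vz of E
| Va | Vb | Vc | Vd
| Vi of E & 'I_8 & 'I_5.
Arguments Va {V E}. Arguments Vb {V E}. Arguments Vc {V E}. Arguments Vd {V E}.
Arguments Vo {V E}. Arguments Vx {V E}. Arguments Vy {V E}. Arguments Vz {V E}.
Arguments Vi {V E}.

Section Construction.
Variables (V : Type) (o : rel V).
Local Notation E := (oedge o).
Local Notation W := (vtx V E).

Definition esrc (p : E) : V := (val p).1.
Definition etgt (p : E) : V := (val p).2.

(* The 8 forbidding paths per edge p = uv (u = esrc p, v = etgt p):
   k=0 : (1,2) u -> x     k=1 : (3,1) u -> x     k=2 : (2,3) u -> y
   k=3 : (2,1) v -> x     k=4 : (3,2) v -> x     k=5 : (1,3) v -> y
   k=6 : (4,1) x -> z     k=7 : (4,2) y -> z *)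
Definition fa (k : nat) : nat :=
  match k with 0 => 1 | 1 => 3 | 2 => 2 | 3 => 2 | 4 => 3 | 5 => 1 | _ => 4 end.
Definition fb (k : nat) : nat :=
  match k with 0 => 2 | 1 => 1 | 2 => 3 | 3 => 1 | 4 => 2 | 5 => 3 | 6 => 1 | _ => 2 end.

Definition pstart (p : E) (k : nat) : W :=
  match k with 0 | 1 | 2 => (@Vo V E) (esrc p) | 3 | 4 | 5 => (@Vo V E) (etgt p)
             | 6 => (@Vx V E p) | _ => (@Vy V E p) end.
Definition pend (p : E) (k : nat) : W :=
  match k with 0 | 1 | 3 | 4 => (@Vx V E p) | 2 | 5 => (@Vy V E p) | _ => (@Vz V E p) end.

Definition pvtx (p : E) (k : 'I_8) (j : nat) : W :=
  if j == 0 then pstart p k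
  else if j == 6 then pend p k
  else (@Vi V E p k (inord j.-1)).

Definition G'edge (x y : W) : Prop :=
  (exists p, x = (@Vo V E) (esrc p) /\ (y = (@Vx V E p) \/ y = (@Vy V E p)))
  \/ (exists p k j, j < 6 /\ x = pvtx p k j /\ y = pvtx p k j.+1)
  \/ (x = Va /\ (y = Vb \/ y = Vc \/ y = Vd))
  \/ (x = Vb /\ (y = Vc \/ y = Vd))
  \/ (exists p, x = (@Vz V E p) /\ y = Vc).

Definition G'adj (x y : W) : Prop := G'edge x y \/ G'edge y x.

Definition G'L (Lint : E -> 'I_8 -> 'I_5 -> seq nat) (x : W) : seq nat :=
  match x with
  | Vo _ => [:: 1; 2; 3] | Vx _ => [:: 1; 2; 4] | Vy _ => [:: 3; 4]
  | Vz _ => [:: 1; 2; 4]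
  | Va => [:: 1; 2; 3] | Vb => [:: 1; 2] | Vc => [:: 3; 4] | Vd => [:: 4]
  | Vi p k i => Lint p k i
  end.

Definition valid_paths (Lint : E -> 'I_8 -> 'I_5 -> seq nat) : Prop :=
  (forall p k i, all (fun c => 1 <= c <= 4) (Lint p k i)) /\
  (forall p (k : 'I_8),
     forbidding (fun j : 'I_7 => G'L Lint (pvtx p k j)) (fa k) (fb k)).

Definition is_alpha (Lint : E -> 'I_8 -> 'I_5 -> seq nat) (alpha : W -> nat) : Prop :=
  [/\ forall u, alpha (@Vo V E u) = 1,
      forall p, alpha ((@Vx V E p)) = 4 /\ alpha ((@Vy V E p)) = 4 /\ alpha ((@Vz V E p)) = 4,
      alpha Va = 1 /\ alpha Vb = 2 /\ alpha Vc = 3 /\ alpha Vd = 4 &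
      Lcoloring G'adj (G'L Lint) alpha].

Definition beta_of (alpha : W -> nat) (x : W) : nat :=
  match x with Va => 2 | Vb => 1 | _ => alpha x end.
End Construction.

From mathcomp Require Import all_boot.
From Stdlib Require Import Classical.
Set Implicit Arguments. Unset Strict Implicit. Unset Printing Implicit Defensive.

(* In a recoloring sequence from alpha to beta, look at the first step at
   which b leaves colour 2: it becomes 1 while a keeps its colour, so a avoids
   both 1 and 2 and is coloured 3; then c is coloured 4 and every z_uv is
   coloured 1 or 2.  In that colouring every forbidding path excludes its
   forbidden pair of end colours, and for an edge uv these eight exclusions
   rule out u and v having the same colour.  So the colours of the original
   vertices form a proper 3-colouring of G. *)

Lemma first_change (T : eqType) (f : nat -> T) (x : T) (m : nat) :
  f 0 = x -> f m != x -> exists2 k, k < m & f k = x /\ f k.+1 != x.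
Proof.
move=> f0; elim: m => [|m IHm]; first by rewrite f0 eqxx.
move=> fm; case: (eqVneq (f m) x) => [fmx|/IHm[k lt_km fk]]; first by exists m.
by exists k; first exact: ltnW.
Qed.

Lemma col_step_other (T : Type) (g h : T -> nat) (w x : T) :
  col_equal g h \/ col_adjacent g h -> g w <> h w -> x <> w -> g x = h x.
Proof.
case=> [gh _ _|[w' [_ gh]] gw xw]; first exact: gh.
have ww' : w = w' by apply: NNPP => ww'; exact/gw/gh.
by apply: gh; rewrite -ww'.
Qed.

Lemma forbidding_Lcoloring_ends (Lp : 'I_7 -> seq nat) (a b : nat)
    (g : 'I_7 -> nat) :
  forbidding Lp a b -> Lcoloring path7_adj Lp g -> (g pu != a) || (g pv6 != b).
Proof.
move=> [ends _] gL; have [gLp _] := gL.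
by apply/(ends _ _ (gLp pu) (gLp pv6)); exists g.
Qed.

Lemma three_colorable_of_proper (V : Type) (e : rel V) (f : V -> nat) :
  (forall u, f u \in [:: 1; 2; 3]) -> (forall u v, e u v -> f u != f v) ->
  three_colorable e.
Proof.
move=> f123 fP; exists (fun u => inord (f u).-1) => u v /fP.
move: (f123 u) (f123 v); rewrite !inE.
by move=> /or3P[]/eqP-> /or3P[]/eqP->; rewrite // -(inj_eq val_inj) /= !inordK.
Qed.

Section Construction.
Variables (V : Type) (o : rel V) (Lint : oedge o -> 'I_8 -> 'I_5 -> seq nat).
Hypothesis HL : valid_paths Lint.
Local Notation W := (vtx V (oedge o)).
Local Notation LG' := (G'L Lint).

Lemma Lcoloring_path (gam : W -> nat) p (k : 'I_8) :
  Lcoloring (@G'adj V o) LG' gam ->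
  Lcoloring path7_adj (fun j : 'I_7 => LG' (pvtx p k j))
    (fun j : 'I_7 => gam (pvtx p k j)).
Proof.
move=> [gL gP]; split=> [j|i j ij]; first exact: gL.
apply: gP; case: ij => ij; [left|right]; right; left.
- by exists p, k, i; rewrite -ltnS ij.
- by exists p, k, j; rewrite -ltnS ij.
Qed.

Lemma Lcoloring_path_ends (gam : W -> nat) p (k : 'I_8) :
  Lcoloring (@G'adj V o) LG' gam ->
  (gam (pstart p k) != fa k) || (gam (pend p k) != fb k).
Proof.
move=> gL; have [_ forb] := HL.
exact: forbidding_Lcoloring_ends (forb p k) (Lcoloring_path p k gL).
Qed.

Lemma Lcoloring_edge_ends_neq (gam : W -> nat) (p : oedge o) :
  Lcoloring (@G'adj V o) LG' gam -> gam (Vz p) \in [:: 1; 2] ->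
  gam (Vo (esrc p)) != gam (Vo (etgt p)).
Proof.
move=> gL z12; have [gLW gP] := gL.
have ends (k : nat) (lt_k8 : k < 8) := Lcoloring_path_ends p (Ordinal lt_k8) gL.
have ux : gam (Vo (esrc p)) != gam (Vx p).
  by apply/eqP/gP; left; left; exists p; split; [|left].
have uy : gam (Vo (esrc p)) != gam (Vy p).
  by apply/eqP/gP; left; left; exists p; split; [|right].
move: (gLW (Vo (esrc p))) (gLW (Vo (etgt p))) (gLW (Vx p)) (gLW (Vy p)) z12
  ux uy (ends 0 isT) (ends 1 isT) (ends 2 isT) (ends 3 isT) (ends 4 isT)
  (ends 5 isT) (ends 6 isT) (ends 7 isT); rewrite /= !inE.
by move=> /or3P[]/eqP-> /or3P[]/eqP-> /or3P[]/eqP-> /orP[]/eqP-> /orP[]/eqP->.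
Qed.

Lemma Lcoloring_b_flip_a3 (g h : W -> nat) :
  Lcoloring (@G'adj V o) LG' g -> Lcoloring (@G'adj V o) LG' h ->
  g Va = h Va -> g Vb = 2 -> h Vb != 2 -> g Va = 3.
Proof.
move=> [gL gP] [hL hP] gha gb hb.
have ab : @G'adj V o Va Vb by left; right; right; left; split; [|left].
move: (gL Va) (hL Vb) hb (gP _ _ ab) (hP _ _ ab); rewrite gha gb /= !inE.
by move=> /or3P[]/eqP-> /orP[]/eqP->.
Qed.

Lemma Lcoloring_a3_z12 (gam : W -> nat) (p : oedge o) :
  Lcoloring (@G'adj V o) LG' gam -> gam Va = 3 -> gam (Vz p) \in [:: 1; 2].
Proof.
move=> [gL gP] a3.
have ac : @G'adj V o Va Vc by left; right; right; left; split; [|right; left].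
have zc : @G'adj V o (Vz p) Vc by left; do 4 right; exists p.
move: (gL Vc) (gL (Vz p)) (gP _ _ ac) (gP _ _ zc); rewrite a3 /= !inE.
by move=> /orP[]/eqP-> /or3P[]/eqP->.
Qed.

Lemma three_colorable_of_Lcoloring (e : rel V) (gam : W -> nat) :
  orientation e o -> Lcoloring (@G'adj V o) LG' gam ->
  (forall p, gam (Vz p) \in [:: 1; 2]) -> three_colorable e.
Proof.
move=> [_ [oe _]] gL z12; apply: (three_colorable_of_proper (f := gam \o Vo)).
  by move=> u; apply: gL.1.
move=> u v /oe /orP[uv|vu].
- exact: (Lcoloring_edge_ends_neq (p := exist _ (u, v) uv) gL (z12 _)).
- by rewrite eq_sym; exact: (Lcoloring_edge_ends_neq (p := exist _ (v, u) vu) gL (z12 _)).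
Qed.

End Construction.

Theorem mainTheorem8 (V : finType) (e o : rel V)
  (He : simple_graph e) (Ho : orientation e o)
  (Lint : oedge o -> 'I_8 -> 'I_5 -> seq nat)
  (HL : valid_paths Lint)
  (alpha : vtx V (oedge o) -> nat) (Ha : is_alpha Lint alpha) :
  (exists (g : nat -> vtx V (oedge o) -> nat) (m : nat),
     [/\ recoloring_seq (@G'adj V o) (G'L Lint) g m,
         col_equal (g 0) alpha &
         col_equal (g m) (beta_of alpha)]) ->
  three_colorable e.
Proof.
move=> [g [m [[gL gstep] g0 gm]]].
have [_ _ [_ [alpha_b _]] _] := Ha.
have [k lt_km [gk_b gk1_b]] : exists2 k, k < m & g k Vb = 2 /\ g k.+1 Vb != 2.
  by apply: (first_change (f := fun t => g t Vb)); rewrite ?g0 ?gm.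
have gkL := gL k (ltnW lt_km).
have a_fixed : g k Va = g k.+1 Va.
  apply: (col_step_other (w := Vb) (gstep k lt_km)) => // same_b.
  by move: gk1_b; rewrite -same_b gk_b.
have a3 := Lcoloring_b_flip_a3 gkL (gL k.+1 lt_km) a_fixed gk_b gk1_b.
apply: (three_colorable_of_Lcoloring HL Ho gkL) => p.
exact: Lcoloring_a3_z12 gkL a3.
Qed.
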